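(* Let $m\ge 3$. Let $H_2$ be the graph with vertices $v_1,\dots,v_6$ and edges $v_1v_2,v_2v_3,v_3v_4,v_4v_5,v_5v_6,v_6v_1,v_2v_5,v_3v_6$, and let $H_4$ be the graph with vertices $v_1,\dots,v_6$ and edges $v_1v_2,v_2v_3,v_3v_4,v_4v_5,v_5v_6,v_6v_1,v_2v_6,v_3v_5$ (each has exactly two vertices of degree $2$, namely $v_1$ and $v_4$). Let $G_1$ (respectively $G_2$) be the cubic graph constructed from the cycle $C_m$ by replacing each vertex with a copy of $H_4$ (respectively $H_2$), where each edge $uv$ of $C_m$ is replaced by an edge joining a degree-$2$ vertex of the copy for $u$ to a degree-$2$ vertex of the copy for $v$, each degree-$2$ vertex being used exactly once. Then (a) $G_1$ is a bridgeless, Class $1$ cubic graph with triangles; (b) $G_2$ is a bridgeless, Class $1$, triangle-free cubic graph; and (c) for $i=1,2$, $c_2(G_i)-\left\lceil\frac{|V(G_i)|+2}{4}\right\rceil=\left\lfloor\frac{m-1}{2}\right\rfloor$.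
   Context: A graph is bridgeless if it has no bridge. A graph of maximum degree $\Delta$ is Class $1$ if its chromatic index is $\Delta$ and Class $2$ if it is $\Delta+1$. For a graph $G=(V,E)$ and $S_0\subseteq V$, the irreversible $2$-threshold conversion process sets, for $t=1,2,\dots$, $S_t=S_{t-1}\cup\{v: v \text{ has at least } 2 \text{ neighbours in } S_{t-1}\}$; $S_0$ is a $2$-conversion set if $S_t=V$ for some $t$, and $c_2(G)$ is the minimum size of a $2$-conversion set. *)

From mathcomp Require Import all_boot all_order all_algebra.
Set Implicit Arguments. Unset Strict Implicit. Unset Printing Implicit Defensive.

Section GraphNotions.
Variable T : finType.
Implicit Types (e : rel T) (S : {set T}).

Definition simple_graph e := irreflexive e /\ symmetric e.

Definition nbhd e (v : T) : {set T} := [set w | e v w].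
Definition deg e (v : T) : nat := #|nbhd e v|.
Definition maxdeg e : nat := \max_(v : T) deg e v.
Definition cubic e := forall v, deg e v = 3.

Definition proper_edge_colouring e k (c : T -> T -> 'I_k) :=
  (forall x y, e x y -> c x y = c y x) /\
  (forall x y z, e x y -> e x z -> y != z -> c x y != c x z).
Definition edge_colourable e k := exists c, @proper_edge_colouring e k c.
Definition is_chromatic_index e k :=
  edge_colourable e k /\ forall j, edge_colourable e j -> k <= j.
Definition class1 e := is_chromatic_index e (maxdeg e).

Definition has_triangle e := exists x y z, [&& e x y, e y z & e z x].

Definition remove_edge e (u v : T) : rel T :=
  [rel x y | e x y && ~~ (((x == u) && (y == v)) || ((x == v) && (y == u)))].
Definition is_bridge e u v := e u v /\ ~~ connect (remove_edge e u v) u v.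
Definition bridgeless e := forall u v, ~ is_bridge e u v.

Definition conv_step e S : {set T} :=
  S :|: [set v | 2 <= #|[set w in S | e v w]|].
Definition conversion_set2 e S := exists t : nat, iter t (conv_step e) S = setT.
Definition is_c2 e (k : nat) :=
  (exists S, conversion_set2 e S /\ #|S| = k) /\
  (forall S, conversion_set2 e S -> k <= #|S|).
End GraphNotions.

Unset Implicit Arguments.
(* The gadgets, vertices v1..v6 numbered 0..5 *)
Definition H2_edges : seq (nat * nat) :=
  [:: (0,1); (1,2); (2,3); (3,4); (4,5); (5,0); (1,4); (2,5)]%N.
Definition H4_edges : seq (nat * nat) :=
  [:: (0,1); (1,2); (2,3); (3,4); (4,5); (5,0); (1,5); (2,4)]%N.

Definition Hadj (E : seq (nat * nat)) (a b : 'I_6) : bool :=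
  (((a : nat), (b : nat)) \in E) || (((b : nat), (a : nat)) \in E).

(* link: v4 (index 3) of copy i joined to v1 (index 0) of copy i+1 mod m *)
Definition ring_link (m : nat) (x y : 'I_m * 'I_6) : bool :=
  [&& (x.2 : nat) == 3, (y.2 : nat) == 0 & (y.1 : nat) == (x.1.+1 %% m)].

Definition ring_graph (m : nat) (E : seq (nat * nat)) : rel ('I_m * 'I_6) :=
  [rel x y | ((x.1 == y.1) && Hadj E x.2 y.2) || @ring_link m x y || @ring_link m y x].

Definition G1 (m : nat) := @ring_graph m H4_edges.
Definition G2 (m : nat) := @ring_graph m H2_edges.

From mathcomp Require Import all_boot all_order all_algebra.
From mathcomp Require Import zify.

(* G_1 and G_2 are rings of m copies of a six-vertex gadget, copy i joined to
   copy i + 1 by a link from its v4 to the next v1, and every property reduces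
   to a finite property of the gadget.  Cubicity and triangles are local.  An
   edge inside a copy has a detour inside the gadget, and a link has a detour
   running once around the ring.  Both gadgets are a hexagon v1...v6 plus two
   chords, and colouring the hexagon alternately 1, 2 and all chords and links
   0 is a proper 3-edge-colouring.  For c_2: in a cubic graph, a set inducing
   minimum degree 2 that misses S never gets converted, and each gadget has
   such a set avoiding any given vertex, so a conversion set has at least two
   vertices in every copy; two well-chosen vertices per copy do convert
   everything.  So c_2(G_i) = 2m, and 2m - ceil((6m + 2) / 4) = floor((m - 1) / 2). *)

Set Implicit Arguments.
Unset Strict Implicit.
Unset Printing Implicit Defensive.

Section Graphs.
Variable T : finType.
Implicit Types (e : rel T) (u v x : T) (C S : {set T}).

Lemma remove_edgeC e u v : remove_edge e u v =2 remove_edge e v u.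
Proof. by move=> x y; rewrite /remove_edge /= orbC. Qed.

Lemma remove_edge_sym e u v : symmetric e -> symmetric (remove_edge e u v).
Proof.
move=> e_sym x y; rewrite /remove_edge /= e_sym; congr (_ && ~~ _).
by rewrite orbC; congr (_ || _); rewrite andbC.
Qed.

Lemma is_bridgeC e u v : symmetric e -> is_bridge e u v -> is_bridge e v u.
Proof.
move=> e_sym [euv no_detour]; split; first by rewrite e_sym.
rewrite (sym_connect_sym (remove_edge_sym v u e_sym)).
by rewrite -(eq_connect (remove_edgeC e u v)).
Qed.

Lemma deg_le_colours e k (c : T -> T -> 'I_k) v :
  proper_edge_colouring e c -> deg e v <= k.
Proof.
move=> [_ c_proper]; rewrite -[k]card_ord /deg.
have c_inj : {in nbhd e v &, injective (c v)}.
  move=> w1 w2; rewrite !inE => ew1 ew2 c_eq; apply/eqP/negPn/negP => w12.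
  by have := c_proper v w1 w2 ew1 ew2 w12; rewrite c_eq eqxx.
by rewrite -(card_in_imset c_inj) max_card.
Qed.

Lemma maxdeg_cubic e x : cubic e -> maxdeg e = 3.
Proof.
move=> e_cubic; apply/eqP; rewrite eqn_leq.
apply/andP; split; first by apply/bigmax_leqP => v _; rewrite e_cubic.
by rewrite -(e_cubic x) (leq_bigmax x).
Qed.

Lemma class1_cubic e x : cubic e -> edge_colourable e 3 -> class1 e.
Proof.
move=> e_cubic col3; rewrite /class1 (maxdeg_cubic x e_cubic).
by split=> // j [c /(deg_le_colours x)]; rewrite e_cubic.
Qed.

Definition two_core e C := forall v, v \in C -> 1 < #|[set w in C | e v w]|.

(* In a graph of maximum degree 3, a vertex with two neighbours in C has at
   most one outside C, so it can never be converted from outside. *)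
Lemma iter_conv_step_disjoint e C S :
    (forall v, deg e v <= 3) -> two_core e C -> [disjoint C & S] ->
  forall t, [disjoint C & iter t (conv_step e) S].
Proof.
move=> deg3 C_core CS; elim=> //= t IH; apply/pred0P => v /=.
apply/andP => -[vC]; rewrite in_setU (disjointFr IH vC) inE /=.
apply/negP; rewrite -leqNgt.
set X := iter t _ S.
have out : [set w in X | e v w] \subset nbhd e v :\: [set w in C | e v w].
  apply/subsetP => w; rewrite !inE => /andP[wX ->]; rewrite !andbT.
  by apply: contraTN wX => wC; rewrite (disjointFr IH wC).
have inC : [set w in C | e v w] \subset nbhd e v.
  by apply/subsetP => w; rewrite !inE => /andP[].
have := subset_leq_card out; rewrite cardsD (setIidPr inC).
by have := C_core v vC; have := deg3 v; rewrite /deg; lia.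
Qed.

Lemma conversion_set2_meets_two_core e C S :
    (forall v, deg e v <= 3) -> two_core e C -> C != set0 ->
  conversion_set2 e S -> ~~ [disjoint C & S].
Proof.
move=> deg3 C_core /set0Pn[v vC] [t S_conv]; apply/negP => CS.
have := disjointFr (iter_conv_step_disjoint deg3 C_core CS t) vC.
by rewrite S_conv in_setT.
Qed.

End Graphs.

Section Homomorphisms.
Variables (T U : finType) (e : rel T) (e' : rel U) (f : T -> U).

Lemma connect_homo :
  (forall x y, e x y -> connect e' (f x) (f y)) ->
  forall x y, connect e x y -> connect e' (f x) (f y).
Proof.
move=> f_conn x y /connectP[p p_path ->] {y}; elim: p x p_path => //= y p IH x.
by case/andP=> /f_conn exy /IH; apply: connect_trans.
Qed.

Hypotheses (f_inj : injective f) (f_homo : {homo f : x y / e x y >-> e' x y}).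

Lemma card_neighbours_imset (X : {set T}) (Y : {set U}) v :
  f @: X \subset Y -> #|[set w in X | e v w]| <= #|[set w in Y | e' (f v) w]|.
Proof.
move=> XY; rewrite -(card_imset _ f_inj); apply/subset_leq_card/subsetP => u.
case/imsetP=> w; rewrite inE => /andP[wX evw] ->.
by rewrite inE f_homo // andbT (subsetP XY) ?imset_f.
Qed.

Lemma two_core_imset C : two_core e C -> two_core e' (f @: C).
Proof.
move=> C_core u /imsetP[v vC ->].
exact: leq_trans (C_core v vC) (card_neighbours_imset v (subxx _)).
Qed.

Lemma conv_step_imset (X : {set T}) (Y : {set U}) :
  f @: X \subset Y -> f @: conv_step e X \subset conv_step e' Y.
Proof.
move=> XY; apply/subsetP => u /imsetP[v]; rewrite !inE => /orP[vX | v_conv] ->.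
  by rewrite (subsetP XY) ?imset_f.
by rewrite (leq_trans v_conv (card_neighbours_imset v XY)) orbT.
Qed.

Lemma iter_conv_step_imset (X : {set T}) (Y : {set U}) t :
  f @: X \subset Y -> f @: iter t (conv_step e) X \subset iter t (conv_step e') Y.
Proof. by move=> XY; elim: t => //= t; apply: conv_step_imset. Qed.

End Homomorphisms.

Lemma card_fibres (I J : finType) (S : {set I * J}) :
  #|S| = \sum_(i : I) #|[set j | (i, j) \in S]|.
Proof.
rewrite -sum1_card (eq_bigr (fun i => \sum_(j | (i, j) \in S) 1)) => [|i _].
  by rewrite pair_big_dep /=; apply: eq_bigl => -[i j].
by rewrite -sum1_card; apply: eq_bigl => j; rewrite inE.
Qed.

Lemma val_iter_ordS n (i : 'I_n) k : val (iter k (@ordS n) i) = (i + k) %% n.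
Proof.
elim: k => [|k IH]; first by rewrite addn0 modn_small.
by rewrite iterS /= IH -addn1 modnDml addn1 addnS.
Qed.

Lemma iter_ordS_neq n (i : 'I_n) k : 0 < k < n -> iter k (@ordS n) i != i.
Proof.
case/andP=> k_gt0 k_lt; apply/eqP => /(congr1 val)/eqP.
rewrite val_iter_ordS -[X in _ == X](modn_small (ltn_ord i)).
rewrite -[X in _ == X %% n]addn0 eqn_modDl mod0n modn_small //.
by rewrite eqn0Ngt k_gt0.
Qed.

Lemma connect_ordS_around n (i : 'I_n) :
  connect [rel j k | (j != i) && (k == ordS j)] (ordS i) i.
Proof.
have n_gt0 : 0 < n by apply: leq_ltn_trans (ltn_ord i).
have reach k : k < n -> connect [rel j k | (j != i) && (k == ordS j)]
                                (ordS i) (iter k (@ordS n) (ordS i)).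
  elim: k => [|k IH] k_lt; first exact: connect0.
  apply: connect_trans (IH (ltnW k_lt)) (connect1 _).
  by rewrite /= eqxx andbT -iterSr iter_ordS_neq.
have := reach n.-1; rewrite ltn_predL n_gt0 -iterSr prednK // => /(_ isT).
suff -> : iter n (@ordS n) i = i by [].
by apply: val_inj; rewrite val_iter_ordS modnDr modn_small.
Qed.

(* enum 'I_n goes through the opaque idP and does not compute; finite checks
   over 'I_6 are evaluated after rewriting it to this computable copy. *)
Definition ord_seq n : seq 'I_n.+1 := [seq inZp k | k <- iota 0 n.+1].

Lemma enum_ordE n : enum 'I_n.+1 = ord_seq n.
Proof.
apply: (inj_map val_inj); rewrite val_enum_ord -map_comp map_id_in // => k.
by rewrite mem_iota add0n /= => /modn_small.
Qed.

Section FiniteChecks.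
Variable T : finType.
Implicit Types (e : rel T) (r s : seq T).

Lemma forall_enumP (P : pred T) : reflect (forall x, P x) (all P (enum T)).
Proof.
by apply: (iffP allP) => [P_ x | P_ x _]; [apply: P_; rewrite mem_enum | apply: P_].
Qed.

Lemma card_set_count (P : pred T) : #|[set x | P x]| = count P (enum T).
Proof. by rewrite cardsE cardE enumT /enum_mem size_filter. Qed.

Lemma deg_count e v : deg e v = count (e v) (enum T).
Proof. exact: card_set_count. Qed.

Lemma two_core_seq e s :
  all (fun v => 1 < count (fun w => (w \in s) && e v w) (enum T)) s ->
  two_core e [set x in s].
Proof.
move=> s_core v; rewrite inE => vs.
have -> : [set w in [set x in s] | e v w] = [set w | (w \in s) && e v w].
  by apply/setP => w; rewrite !inE.
by rewrite card_set_count (allP s_core).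
Qed.

Definition conv_seq r e s :=
  [seq v <- r | (v \in s) || (1 < count (fun w => (w \in s) && e v w) r)].

Lemma iter_conv_step_seq e s t :
  iter t (conv_step e) [set x in s] = [set x in iter t (conv_seq (enum T) e) s].
Proof.
elim: t => //= t ->; apply/setP => v.
rewrite !inE mem_filter mem_enum andbT -card_set_count.
by under eq_finset do rewrite inE.
Qed.

Lemma conversion_set2_seq e s t :
  all (mem (iter t (conv_seq (enum T) e) s)) (enum T) -> conversion_set2 e [set x in s].
Proof.
move=> /forall_enumP s_conv; exists t; rewrite iter_conv_step_seq.
by apply/setP => x; rewrite inE in_setT; apply: s_conv.
Qed.

Lemma two_cores_avoiding_seq e (cores : seq (seq T)) :
    all (fun a => has (fun s => [&& a \notin s, s != [::] &
           all (fun v => 1 < count (fun w => (w \in s) && e v w) (enum T)) s]) cores)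
        (enum T) ->
  forall a, exists C, [/\ two_core e C, C != set0 & a \notin C].
Proof.
move=> /forall_enumP cover a; have /hasP[s _ /and3P[a_s s_ne s_core]] := cover a.
exists [set x in s]; split; [exact: two_core_seq | | by rewrite inE].
by case: s s_ne {a_s s_core} => // x s _; apply/set0Pn; exists x; rewrite inE mem_head.
Qed.

Lemma proper_edge_colouring_enum e k (c : T -> T -> 'I_k) :
    (forall x y, c x y = c y x) ->
    all (fun x => all (fun y => all (fun z =>
      e x y ==> e x z ==> (y != z) ==> (c x y != c x z)) (enum T)) (enum T)) (enum T) ->
  proper_edge_colouring e c.
Proof.
move=> c_sym /forall_enumP c_proper; split=> [x y _ | x y z xy xz yz]; first exact: c_sym.
have /forall_enumP/(_ y)/forall_enumP/(_ z) := c_proper x.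
by rewrite xy xz yz.
Qed.

Lemma colour_avoids_enum e (P : pred T) k (c : T -> T -> 'I_k) (col : 'I_k) :
    all (fun a => all (fun b => P a ==> e a b ==> (c a b != col)) (enum T)) (enum T) ->
  forall a b, P a -> e a b -> c a b != col.
Proof.
move=> /forall_enumP c_avoids a b Pa ab.
by have /forall_enumP/(_ b) := c_avoids a; rewrite Pa ab.
Qed.

Lemma triangle_free_enum e :
    all (fun x => all (fun y => all (fun z =>
      ~~ [&& e x y, e y z & e z x]) (enum T)) (enum T)) (enum T) ->
  ~ has_triangle e.
Proof.
move=> /forall_enumP free [x [y [z xyz]]].
by have /forall_enumP/(_ y)/forall_enumP/(_ z) := free x; rewrite xyz.
Qed.

End FiniteChecks.

Definition port (a : 'I_6) : bool := (a == 0 :> nat) || (a == 3 :> nat).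
Definition v1 : 'I_6 := inZp 0.
Definition v4 : 'I_6 := inZp 3.

Lemma v4_neq_v1 : (v4 == v1) = false.
Proof. by []. Qed.

Lemma Hadj_sym E : symmetric (Hadj E).
Proof. by move=> a b; rewrite /Hadj orbC. Qed.

Record ring_gadget (E : seq (nat * nat)) : Prop := RingGadget {
  gadget_irr : irreflexive (Hadj E);
  gadget_deg : forall a, deg (Hadj E) a + port a = 3;
  gadget_bridgeless : bridgeless (Hadj E);
  gadget_ports_connected : connect (Hadj E) v1 v4;
  gadget_colouring : exists c : 'I_6 -> 'I_6 -> 'I_3,
    proper_edge_colouring (Hadj E) c /\ forall a b, port a -> Hadj E a b -> c a b != ord0;
  gadget_cores : forall a, exists C, [/\ two_core (Hadj E) C, C != set0 & a \notin C];
  gadget_conversion_set : exists2 B, conversion_set2 (Hadj E) B & #|B| = 2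
}.

Section RingGraph.
Variables (m : nat) (E : seq (nat * nat)).
Hypothesis m_gt1 : 1 < m.
Local Notation G := (ring_graph m E).
Local Notation H := (Hadj E).
Implicit Types (i j : 'I_m) (a b : 'I_6) (x y z : 'I_m * 'I_6).

Let i0 : 'I_m := Ordinal (ltnW m_gt1).

Definition linked x y := ring_link m x y || ring_link m y x.

Lemma ring_graphE x y : G x y = (x.1 == y.1) && H x.2 y.2 || linked x y.
Proof. by rewrite /= orbA. Qed.

Lemma ring_linkE x y : ring_link m x y = [&& x.2 == v4, y.2 == v1 & y.1 == ordS x.1].
Proof. by []. Qed.

Lemma ordS_neq i : ordS i != i.
Proof. by rewrite -[ordS i]/(iter 1 (@ordS m) i) iter_ordS_neq. Qed.

Lemma linkedC x y : linked x y = linked y x.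
Proof. by rewrite /linked orbC. Qed.

Lemma linked_copy_neq x y : linked x y -> x.1 != y.1.
Proof.
rewrite /linked !ring_linkE => /orP[] /and3P[_ _ /eqP->]; first by rewrite eq_sym ordS_neq.
exact: ordS_neq.
Qed.

Lemma linked_port x y : linked x y -> port x.2.
Proof. by rewrite /linked !ring_linkE => /orP[/and3P[/eqP-> _ _] | /and3P[_ /eqP-> _]]. Qed.

Lemma linked_functional x y z : linked x y -> linked x z -> y = z.
Proof.
case: x y z => [i a] [j b] [k c]; rewrite /linked /ring_link /=.
case/orP=> /and3P[/eqP y1 /eqP y2 /eqP y3];
  case/orP=> /and3P[/eqP z1 /eqP z2 /eqP z3]; try congruence.
  by congr pair; apply: val_inj; rewrite /= ?y2 ?z2 ?y3 ?z3.
congr pair; last by apply: val_inj; rewrite /= y1 z1.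
by apply: ordS_inj; apply: val_inj; rewrite /= -y3 -z3.
Qed.

Lemma linked_of_port x : port x.2 -> exists y, linked x y.
Proof.
case: x => i a; rewrite /linked /ring_link /= => /orP[] /eqP a_val.
  exists (ord_pred i, v4); have i_eq := congr1 val (ord_predK i).
  by rewrite /= in i_eq; rewrite /= a_val i_eq !eqxx.
by exists (ordS i, v1); rewrite /= a_val !eqxx.
Qed.

Lemma card_linked x : #|[set y | linked x y]| = port x.2.
Proof.
case: (boolP (port x.2)) => [/linked_of_port[y0 xy0] | x_inner].
  have -> : [set y | linked x y] = [set y0].
    apply/setP => y; rewrite !inE.
    by apply/idP/eqP => [/(linked_functional xy0)<- | ->].
  exact: cards1.
apply: eq_card0 => y; rewrite !inE.
by apply/negP => /linked_port; rewrite (negPf x_inner).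
Qed.

Lemma copy_homo i : {homo pair i : a b / H a b >-> G a b}.
Proof. by move=> a b ab; rewrite ring_graphE /= eqxx ab. Qed.

Lemma copy_inj i : injective (pair i : 'I_6 -> 'I_m * 'I_6).
Proof. by move=> a b []. Qed.

Lemma same_copy_edge x y : G x y -> x.1 = y.1 -> H x.2 y.2.
Proof.
by rewrite ring_graphE => /orP[/andP[_ //] | /linked_copy_neq/eqP].
Qed.

Lemma ring_graph_sym : symmetric G.
Proof. by move=> x y; rewrite !ring_graphE eq_sym Hadj_sym linkedC. Qed.

Lemma simple_ring_graph : irreflexive H -> simple_graph G.
Proof.
move=> H_irr; split=> [x|]; last exact: ring_graph_sym.
by apply/negP => /same_copy_edge/(_ erefl); rewrite H_irr.
Qed.

Lemma nbhd_ring_graph x :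
  nbhd G x = setX [set x.1] (nbhd H x.2) :|: [set y | linked x y].
Proof. by apply/setP => y; rewrite !inE ring_graphE eq_sym. Qed.

Lemma deg_ring_graph x : deg G x = deg H x.2 + port x.2.
Proof.
rewrite /deg nbhd_ring_graph cardsU cardsX cards1 mul1n card_linked.
suff -> : setX [set x.1] (nbhd H x.2) :&: [set y | linked x y] = set0.
  by rewrite cards0 subn0.
apply/setP => y; rewrite !inE; apply/negP => /andP[/andP[/eqP xy _] /linked_copy_neq].
by rewrite xy eqxx.
Qed.

Lemma cubic_ring_graph : (forall a, deg H a + port a = 3) -> cubic G.
Proof. by move=> H_deg x; rewrite deg_ring_graph H_deg. Qed.

Lemma same_copy_edge_not_bridge x y : bridgeless H -> x.1 = y.1 -> ~ is_bridge G x y.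
Proof.
case: x y => i a [_ b] H_nobridge /= <- [/same_copy_edge/(_ erefl) ab].
apply/negP; rewrite negbK.
have detour : connect (remove_edge H a b) a b.
  by apply/negPn/negP => no_detour; apply: (H_nobridge a b (conj ab no_detour)).
apply: connect_homo detour => c d /andP[cd not_ab]; apply: connect1.
by rewrite /remove_edge /= copy_homo //= !xpair_eqE !eqxx.
Qed.

(* The detour crosses every copy from v1 to v4, going once around the ring. *)
Lemma ring_link_not_bridge x y :
  connect H v1 v4 -> ring_link m x y -> ~ is_bridge G x y.
Proof.
case: x y => i a [j b] v1v4; rewrite ring_linkE => /and3P[/= /eqP-> /eqP-> /eqP->].
case=> _; set R := remove_edge _ _ _; apply/negP; rewrite negbK.
have R_sym : connect_sym R.
  exact/sym_connect_sym/remove_edge_sym/ring_graph_sym.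
have across k : connect R (k, v1) (k, v4).
  apply: connect_homo v1v4 => c d cd; apply: connect1.
  rewrite /R /remove_edge /= copy_homo //= !xpair_eqE.
  apply/negP => /orP[] /and3P[/andP[/eqP k_i _] /eqP k_Si _];
    by have := ordS_neq i; rewrite (_ : ordS i = i) ?eqxx //; congruence.
have step k : k != i -> connect R (k, v1) (ordS k, v1).
  move=> ki; apply: connect_trans (across k) (connect1 _).
  rewrite /R /remove_edge /= ring_graphE /linked !ring_linkE !eqxx orbT !xpair_eqE.
  by rewrite (negPf ki) v4_neq_v1 andbF.
rewrite R_sym; apply: (connect_trans _ (across i)).
apply: (connect_homo (f := fun k => (k, v1))) (connect_ordS_around i).
by move=> k _ /andP[ki /eqP->]; apply: step.
Qed.

Lemma bridgeless_ring_graph : bridgeless H -> connect H v1 v4 -> bridgeless G.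
Proof.
move=> H_nobridge v1v4 x y xy_bridge; have [xy _] := xy_bridge.
move: xy; rewrite ring_graphE => /orP[/andP[/eqP x_y _] | /orP[x_y | y_x]].
- exact: same_copy_edge_not_bridge x_y xy_bridge.
- exact: ring_link_not_bridge x_y xy_bridge.
- exact: ring_link_not_bridge y_x (is_bridgeC ring_graph_sym xy_bridge).
Qed.

Lemma linked_of_edge x y : G x y -> x.1 != y.1 -> linked x y.
Proof. by rewrite ring_graphE => /orP[/andP[/eqP-> _] | //]; rewrite eqxx. Qed.

Definition ring_colouring (c : 'I_6 -> 'I_6 -> 'I_3) x y : 'I_3 :=
  if x.1 == y.1 then c x.2 y.2 else ord0.

Lemma ring_colouring_proper c :
    proper_edge_colouring H c -> (forall a b, port a -> H a b -> c a b != ord0) ->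
  proper_edge_colouring G (ring_colouring c).
Proof.
move=> [c_sym c_proper] c_port; rewrite /ring_colouring.
split=> [x y xy | x y z xy xz yz].
  by rewrite [y.1 == _]eq_sym; case: eqP => // x_y; apply: c_sym; apply: same_copy_edge x_y.
have [x_y | x_ny] := eqVneq x.1 y.1; have [x_z | x_nz] := eqVneq x.1 z.1.
- apply: c_proper (same_copy_edge xy x_y) (same_copy_edge xz x_z) _.
  apply: contra yz; case: y z {xy xz} x_y x_z => [j b] [k d] /= <- <-.
  by rewrite xpair_eqE eqxx.
- exact: c_port (linked_port (linked_of_edge xz x_nz)) (same_copy_edge xy x_y).
- rewrite eq_sym.
  exact: c_port (linked_port (linked_of_edge xy x_ny)) (same_copy_edge xz x_z).
- have := linked_functional (linked_of_edge xy x_ny) (linked_of_edge xz x_nz).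
  by move=> y_z; rewrite y_z eqxx in yz.
Qed.

Lemma class1_ring_graph (c : 'I_6 -> 'I_6 -> 'I_3) :
    (forall a, deg H a + port a = 3) -> proper_edge_colouring H c ->
    (forall a b, port a -> H a b -> c a b != ord0) ->
  class1 G.
Proof.
move=> H_deg c_proper c_port.
apply: (class1_cubic (i0, v1)); first exact: cubic_ring_graph.
by exists (ring_colouring c); apply: ring_colouring_proper.
Qed.

Lemma triangle_copy x y z : irreflexive H -> G x y -> G y z -> G z x -> x.1 = y.1.
Proof.
move=> H_irr xy yz zx; have [G_irr _] := simple_ring_graph H_irr.
apply/eqP/negPn/negP => /(linked_of_edge xy) x_y.
have [z_x | z_nx] := eqVneq z.1 x.1.
  have y_z : linked y z.
    by apply: (linked_of_edge yz); rewrite z_x eq_sym; apply: linked_copy_neq x_y.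
  by move: zx; rewrite -(linked_functional y_z (etrans (linkedC _ _) x_y)) G_irr.
have x_z : linked x z by rewrite linkedC; apply: (linked_of_edge zx z_nx).
by move: yz; rewrite (linked_functional x_y x_z) G_irr.
Qed.

Lemma has_triangle_ring_graph : irreflexive H -> has_triangle G <-> has_triangle H.
Proof.
move=> H_irr; split=> [[x [y [z /and3P[xy yz zx]]]] | [a [b [c /and3P[ab bc ca]]]]].
  exists x.2, y.2, z.2; apply/and3P; split; apply: same_copy_edge => //.
  - exact: triangle_copy H_irr xy yz zx.
  - exact: triangle_copy H_irr yz zx xy.
  - exact: triangle_copy H_irr zx xy yz.
by exists (i0, a), (i0, b), (i0, c); rewrite !copy_homo.
Qed.

(* If copy i met S in at most one vertex a, the image of a 2-core of the
   gadget avoiding a would never be converted. *)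
Lemma copy_meets_conversion_set S :
    (forall a, deg H a + port a = 3) ->
    (forall a, exists C, [/\ two_core H C, C != set0 & a \notin C]) ->
  conversion_set2 G S -> forall i, 1 < #|[set a | (i, a) \in S]|.
Proof.
move=> H_deg H_cores S_conv i; rewrite ltnNge; apply/negP => /card_le1_eqP S_i.
have [a S_i_a] : exists a, forall b, (i, b) \in S -> b = a.
  case: (pickP [pred b | (i, b) \in S]) => [a ia | none]; [exists a | exists v1] => b ib.
    by apply: S_i; rewrite inE.
  by have := none b; rewrite /= ib.
have [C [C_core C_ne aC]] := H_cores a.
have deg3 x : deg G x <= 3 by rewrite (cubic_ring_graph H_deg).
have iC_core := two_core_imset (@copy_inj i) (@copy_homo i) C_core.
have := conversion_set2_meets_two_core deg3 iC_core.
rewrite imset_eq0 C_ne => /(_ S isT S_conv)/negP; apply.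
rewrite disjoints_subset; apply/subsetP => _ /imsetP[c cC ->].
by rewrite in_setC; apply/negP => /S_i_a c_a; rewrite -c_a cC in aC.
Qed.

Lemma conversion_set2_copies B :
  conversion_set2 H B -> conversion_set2 G (setX setT B).
Proof.
move=> [t B_conv]; exists t; apply/eqP; rewrite eqEsubset subsetT /=.
apply/subsetP => -[i a] _.
have B_copy : pair i @: B \subset setX setT B.
  by apply/subsetP => _ /imsetP[b bB ->]; rewrite in_setX in_setT bB.
have /subsetP := iter_conv_step_imset (@copy_inj i) (@copy_homo i) t B_copy.
by apply; rewrite B_conv imset_f ?in_setT.
Qed.

Lemma c2_ring_graph :
    (forall a, deg H a + port a = 3) ->
    (forall a, exists C, [/\ two_core H C, C != set0 & a \notin C]) ->
    (exists2 B, conversion_set2 H B & #|B| = 2) ->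
  is_c2 G (2 * m).
Proof.
move=> H_deg H_cores [B B_conv B_card]; split.
  exists (setX setT B); split; first exact: conversion_set2_copies.
  by rewrite cardsX cardsT card_ord B_card mulnC.
move=> S S_conv; rewrite card_fibres -{1}[m]card_ord mulnC -sum_nat_const.
by apply: leq_sum => i _; apply: copy_meets_conversion_set.
Qed.

Lemma ring_graph_properties : ring_gadget E ->
  [/\ simple_graph G, cubic G, bridgeless G, class1 G & is_c2 G (2 * m)].
Proof.
case=> H_irr H_deg H_nobridge v1v4 [c [c_proper c_port]] H_cores H_conv; split.
- exact: simple_ring_graph.
- exact: cubic_ring_graph.
- exact: bridgeless_ring_graph.
- exact: class1_ring_graph c_proper c_port.
- exact: c2_ring_graph.
Qed.

End RingGraph.

(* The hexagon v1...v6 is even, so its edges alternate colours 1 and 2; the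
   chords of H_2 and H_4 match up v2, v3, v5, v6 and take colour 0, which the
   links can share since they only meet the hexagon at v1 and v4. *)
Definition hex_colour (a b : 'I_6) : 'I_3 :=
  inZp (if a./2 == b./2 then 1 else if (ordS a == b) || (ordS b == a) then 2 else 0).

Lemma hex_colour_sym a b : hex_colour a b = hex_colour b a.
Proof. by rewrite /hex_colour eq_sym orbC. Qed.

Definition detour_ok E (a b : 'I_6) (p : seq 'I_6) :=
  path (remove_edge (Hadj E) a b) a p && (last a p == b).

Lemma bridgeless_detours E (detour : nat -> nat -> seq nat) :
  all (fun ab => detour_ok E (inZp ab.1) (inZp ab.2) (map inZp (detour ab.1 ab.2))) E ->
  bridgeless (Hadj E).
Proof.
move=> /allP detours a b; wlog ab : a b / (val a, val b) \in E => [wlog_ab | ].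
  move=> ab_bridge; have [/orP[ab | ba] _] := ab_bridge; first exact: wlog_ab ab _.
  exact: wlog_ab ba (is_bridgeC (Hadj_sym E) ab_bridge).
case=> _; apply/negP; rewrite negbK.
have /andP[p_path /eqP p_last] := detours _ ab; rewrite /= !valZpK in p_path p_last.
by apply/connectP; exists (map inZp (detour a b)).
Qed.

Definition H4_detour (a b : nat) : seq nat :=
  match a, b with
  | 0, 1 => [:: 5; 1] | 1, 2 => [:: 5; 4; 2] | 2, 3 => [:: 4; 3]
  | 3, 4 => [:: 2; 4] | 4, 5 => [:: 2; 1; 5] | 5, 0 => [:: 1; 0]
  | 1, 5 => [:: 0; 5] | 2, 4 => [:: 3; 4]
  | _, _ => [::]
  end.

Definition H2_detour (a b : nat) : seq nat :=
  match a, b with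
  | 0, 1 => [:: 5; 4; 1] | 1, 2 => [:: 4; 3; 2] | 2, 3 => [:: 5; 4; 3]
  | 3, 4 => [:: 2; 1; 4] | 4, 5 => [:: 1; 0; 5] | 5, 0 => [:: 2; 1; 0]
  | 1, 4 => [:: 0; 5; 4] | 2, 5 => [:: 3; 4; 5]
  | _, _ => [::]
  end.

Lemma ring_gadget_H4 : ring_gadget H4_edges.
Proof.
split.
- by move=> a; apply/negbTE; move: a; apply/forall_enumP; rewrite enum_ordE.
- by move=> a; rewrite deg_count; apply/eqP; move: a; apply/forall_enumP; rewrite enum_ordE.
- by apply: (bridgeless_detours (detour := H4_detour)).
- by apply/connectP; exists [:: inZp 1; inZp 2; inZp 3].
- exists hex_colour; split; last by apply: colour_avoids_enum; rewrite enum_ordE.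
  by apply: proper_edge_colouring_enum hex_colour_sym _; rewrite enum_ordE.
- apply: (two_cores_avoiding_seq
    (cores := [:: [:: inZp 0; inZp 1; inZp 5]; [:: inZp 2; inZp 3; inZp 4]])).
  by rewrite enum_ordE.
- exists [set x in [:: inZp 1; inZp 4]]; last by rewrite cardsE; apply/card_uniqP.
  by apply: (conversion_set2_seq (t := 2)); rewrite enum_ordE.
Qed.

Lemma ring_gadget_H2 : ring_gadget H2_edges.
Proof.
split.
- by move=> a; apply/negbTE; move: a; apply/forall_enumP; rewrite enum_ordE.
- by move=> a; rewrite deg_count; apply/eqP; move: a; apply/forall_enumP; rewrite enum_ordE.
- by apply: (bridgeless_detours (detour := H2_detour)).
- by apply/connectP; exists [:: inZp 1; inZp 2; inZp 3].
- exists hex_colour; split; last by apply: colour_avoids_enum; rewrite enum_ordE.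
  by apply: proper_edge_colouring_enum hex_colour_sym _; rewrite enum_ordE.
- apply: (two_cores_avoiding_seq (cores := [:: [:: inZp 0; inZp 1; inZp 4; inZp 5];
    [:: inZp 1; inZp 2; inZp 3; inZp 4]; [:: inZp 2; inZp 3; inZp 4; inZp 5];
    [:: inZp 0; inZp 1; inZp 2; inZp 5]])).
  by rewrite enum_ordE.
- exists [set x in [:: inZp 1; inZp 5]]; last by rewrite cardsE; apply/card_uniqP.
  by apply: (conversion_set2_seq (t := 2)); rewrite enum_ordE.
Qed.

Lemma has_triangle_H4 : has_triangle (Hadj H4_edges).
Proof. by exists (inZp 0), (inZp 1), (inZp 5). Qed.

Lemma triangle_free_H2 : ~ has_triangle (Hadj H2_edges).
Proof. by apply: triangle_free_enum; rewrite enum_ordE. Qed.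

Lemma c2_excess m : 3 <= m ->
  ((2 * m)%:Z - ((#|{: 'I_m * 'I_6}| + 2 + 3) %/ 4)%:Z = ((m - 1) %/ 2)%:Z)%R.
Proof.
move=> m_ge3; rewrite card_prod !card_ord.
by apply/eqP; rewrite GRing.subr_eq -PoszD; apply/eqP; congr Posz; lia.
Qed.

Theorem proposition5p8 (m : nat) (hm : 3 <= m) :
  (simple_graph (G1 m) /\ cubic (G1 m) /\ bridgeless (G1 m) /\
   class1 (G1 m) /\ has_triangle (G1 m)) /\
  (simple_graph (G2 m) /\ cubic (G2 m) /\ bridgeless (G2 m) /\
   class1 (G2 m) /\ ~ has_triangle (G2 m)) /\
  (exists k, is_c2 (G1 m) k /\
     (k%:Z - ((#|{: 'I_m * 'I_6}| + 2 + 3) %/ 4)%:Z = ((m - 1) %/ 2)%:Z)%R) /\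
  (exists k, is_c2 (G2 m) k /\
     (k%:Z - ((#|{: 'I_m * 'I_6}| + 2 + 3) %/ 4)%:Z = ((m - 1) %/ 2)%:Z)%R).
Proof.
have m_gt1 : 1 < m by apply: leq_trans hm.
have [simple1 cubic1 bridgeless1 class1_1 c2_1] :=
  ring_graph_properties m_gt1 ring_gadget_H4.
have [simple2 cubic2 bridgeless2 class1_2 c2_2] :=
  ring_graph_properties m_gt1 ring_gadget_H2.
have triangles1 := has_triangle_ring_graph m_gt1 (gadget_irr ring_gadget_H4).
have triangles2 := has_triangle_ring_graph m_gt1 (gadget_irr ring_gadget_H2).
split; [|split; [|split]].
- by do !split => //; apply/triangles1/has_triangle_H4.
- by do !split => //; move/triangles2/triangle_free_H2.
- by exists (2 * m); split => //; apply: c2_excess.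
- by exists (2 * m); split => //; apply: c2_excess.
Qed.
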